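(* Let $S$ be an entropy function for a finite set $X$, $X'\subset X$, and $S'(A):=\min_{\hat A\subseteq X\setminus X'}S(A\cup\hat A)$ for $A\subseteq X'$. For $f':X'\to\mathbb R$ let $f_{f'}:X\to\mathbb R$ equal $f'$ on $X'$ and $0$ on $X\setminus X'$. Then $f'$ is an EDF for $S'$ if and only if $f_{f'}$ is an EDF for $S$.
   Context: An entropy function for a finite set $X$ is a function $S:2^X\to[0,\infty)$ with $S(\emptyset)=0$, $S(A)+S(B)\ge S(A\cap B)+S(A\cup B)$ and $S(A)+S(B)\ge S(A\setminus B)+S(B\setminus A)$ for all $A,B\subseteq X$. An entanglement distribution function (EDF) for $S$ is a function $f:X\to\mathbb R$ with $\big|\sum_{x\in A}f(x)\big|\le S(A)$ for all $A\subseteq X$. *)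

From mathcomp Require Import all_boot all_order all_algebra.
Set Implicit Arguments. Unset Strict Implicit. Unset Printing Implicit Defensive.
Import Order.TTheory GRing.Theory Num.Theory.
Local Open Scope ring_scope.

Definition entropy_function (R : realFieldType) (X : finType) (S : {set X} -> R) : Prop :=
  [/\ forall A, 0 <= S A,
      S set0 = 0,
      forall A B, S (A :&: B) + S (A :|: B) <= S A + S B &
      forall A B, S (A :\: B) + S (B :\: A) <= S A + S B].

(* f is an EDF for S on the ground set D (only values of f on D matter):
   |sum_{x in A} f x| <= S A for every A subset of D. *)
Definition EDF_on (R : realFieldType) (X : finType) (D : {set X})
    (S : {set X} -> R) (f : X -> R) : Prop :=
  forall A : {set X}, A \subset D -> `|\sum_(x in A) f x| <= S A.

Definition EDF (R : realFieldType) (X : finType) (S : {set X} -> R) (f : X -> R) : Prop :=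
  EDF_on [set: X] S f.

(* S'(A) = min_{Ahat subset X \ X'} S (A :|: Ahat); the seed value S A
   (Ahat = set0) is itself one of the candidates. *)
Definition reduced_entropy (R : realFieldType) (X : finType) (X' : {set X})
    (S : {set X} -> R) (A : {set X}) : R :=
  \big[Order.min/S A]_(B : {set X} | B \subset ~: X') S (A :|: B).

Definition extend_by_zero (R : realFieldType) (X : finType) (X' : {set X})
    (f' : X -> R) : X -> R :=
  fun x => if x \in X' then f' x else 0.

From mathcomp Require Import all_boot all_order all_algebra.
Set Implicit Arguments. Unset Strict Implicit. Unset Printing Implicit Defensive.
Import Order.TTheory GRing.Theory Num.Theory.
Local Open Scope ring_scope.

(* Extending f' by zero makes the sum over any C equal to the sum over C :&: X',
   and every C is (C :&: X') :|: B with B := C :\: X' outside X'. So the EDF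
   bounds S C for f_{f'} are exactly the bounds S (A :|: B) whose minimum over B
   is S' A; no property of entropy functions is needed. *)

Section ReducedEntropy.

Variables (R : realFieldType) (X : finType) (X' : {set X}) (S : {set X} -> R).

Lemma reduced_entropy_le (A B : {set X}) :
  B \subset ~: X' -> reduced_entropy X' S A <= S (A :|: B).
Proof. by move=> sBX'; apply: bigmin_inf sBX' _. Qed.

Lemma le_reduced_entropy (A : {set X}) (c : R) :
  (forall B : {set X}, B \subset ~: X' -> c <= S (A :|: B)) -> c <= reduced_entropy X' S A.
Proof.
move=> le_cS; apply: le_bigmin => //.
by rewrite -[A]setU0; apply: le_cS; rewrite sub0set.
Qed.

End ReducedEntropy.

Lemma sum_extend_by_zero (R : realFieldType) (X : finType) (X' C : {set X})
    (f' : X -> R) :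
  \sum_(x in C) extend_by_zero X' f' x = \sum_(x in C :&: X') f' x.
Proof.
rewrite (big_setID X') /= [X in _ + X]big1 ?addr0.
  by apply: eq_bigr => x; rewrite inE /extend_by_zero => /andP[_ ->].
by move=> x; rewrite inE /extend_by_zero => /andP[/negbTE -> _].
Qed.

Lemma setIU_compl_id (T : finType) (D A B : {set T}) :
  A \subset D -> B \subset ~: D -> (A :|: B) :&: D = A.
Proof.
move=> sAD sBD'; rewrite setIUl (setIidPl sAD).
by move: sBD'; rewrite -disjoints_subset => /disjoint_setI0 ->; rewrite setU0.
Qed.

Theorem proposition27 (R : realFieldType) (X : finType) (S : {set X} -> R)
    (X' : {set X}) (f' : X -> R) :
  entropy_function S ->
  (EDF_on X' (reduced_entropy X' S) f' <-> EDF S (extend_by_zero X' f')).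
Proof.
move=> _; split=> [edf' A _ | edf A sAX'].
- rewrite sum_extend_by_zero; apply: le_trans (edf' _ (subsetIr _ _)) _.
  rewrite -{2}(setID A X') setIC; apply: reduced_entropy_le.
  by rewrite setDE setIC subsetIl.
- apply: le_reduced_entropy => B sBX'.
  by have := edf (A :|: B) (subsetT _); rewrite sum_extend_by_zero setIU_compl_id.
Qed.
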